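(* Let $f : \widehat{\mathbb{Z}} \to \widehat{\mathbb{Z}}$ be congruence stable, let $P$ be a period map of $f$, and let $\mu : \mathbb{N} \to \mathbb{N}$ be a map such that for every $n \in \mathbb{N}$ there is $k \in \mathbb{N}$ with $\mu(n) = P^k(n) = P^{k+1}(n)$. Let $\lambda : \mathbb{N} \to \mathbb{N}$ be defined by $\lambda(n) = $ the period of the reduction $f_{\mu(n)} : \mathbb{Z}/\mu(n)\mathbb{Z} \to \mathbb{Z}/\mu(n)\mathbb{Z}$. Then $\lambda$ is a period map of $f{\Uparrow}_x$ for every $x \in \widehat{\mathbb{Z}}$. Moreover, for all $x, y, s \in \widehat{\mathbb{Z}}$ and $n \in \mathbb{N}$, if $x \equiv_{\mu(n)} y$ then $f{\Uparrow}_x(s) \equiv_n f{\Uparrow}_y(s)$.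
   Context: $\mathbb{N} = \{1,2,\dots\}$, $\widehat{\mathbb{Z}} = \varprojlim_n \mathbb{Z}/n\mathbb{Z}$; $s \equiv_n t$ means $s-t\in n\widehat{\mathbb{Z}}$; $\widehat{\cdot}:\mathbb{N}\to\widehat{\mathbb{Z}}$ is the natural embedding. For continuous $f:\widehat{\mathbb{Z}}\to\widehat{\mathbb{Z}}$, a map $P:\mathbb{N}\to\mathbb{N}$ is a period map of $f$ if $s \equiv_{P(n)} t$ implies $f(s)\equiv_n f(t)$; then $f$ induces reductions $f_n:\mathbb{Z}/P(n)\mathbb{Z}\to\mathbb{Z}/n\mathbb{Z}$ (so $f_{\mu(n)}$ is a self-map of $\mathbb{Z}/\mu(n)\mathbb{Z}$ since $P(\mu(n))=\mu(n)$). $f$ is congruence stable if some period map $P$ satisfies $P^k(n)=P^{k+1}(n)$ for all large $k$, for each $n$. The period of a self-map $\sigma$ of a finite set is the least common multiple over all points $y$ of the cycle length of $y$ (the least $l\ge1$ with $\sigma^k(y)=\sigma^{k+l}(y)$ for some $k\ge0$). For congruence stable $f$ and $x \in \widehat{\mathbb{Z}}$, the map $f{\Uparrow}_x : \widehat{\mathbb{Z}} \to \widehat{\mathbb{Z}}$ is defined by $f{\Uparrow}_x(s) = \lim_{i\to\infty} f^{n_i}(x)$, where $(n_i)$ is any sequence of positive integers with $n_i \to +\infty$ in $\mathbb{R}$ and $\widehat{n_i}\to s$ in $\widehat{\mathbb{Z}}$; for congruence stable $f$ this limit exists and is independent of the chosen sequence, and $f{\Uparrow}_x$ is continuous. *)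

From mathcomp Require Import all_boot.
Set Implicit Arguments. Unset Strict Implicit. Unset Printing Implicit Defensive.

(* The profinite integers Zhat = lim_n Z/nZ, represented as compatible families
   of residues: zval x n is the residue of x modulo n (for n >= 1), in [0, n). *)
Definition compat (x : nat -> nat) : Prop :=
  x 0 = 0 /\ (forall n, 0 < n -> x n < n) /\
  (forall m n, 0 < m -> 0 < n -> m %| n -> x m = x n %% m).

Record Zhat := MkZhat { zval : nat -> nat; zvalP : compat zval }.

(* s =_n t in Zhat, i.e. s - t \in n Zhat, i.e. s and t have the same image in Z/nZ *)
Definition zeqmod (n : nat) (s t : Zhat) : Prop := zval s n = zval t n.

Definition hatf (a : nat) (n : nat) : nat := if n is 0 then 0 else a %% n.

Lemma hatf_compat a : compat (hatf a).
Proof.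
split; first by [].
split; first by case=> [|n] // _; rewrite /hatf ltn_mod.
by case=> [|m] // [|n] // _ _ H; rewrite /hatf modn_dvdm.
Qed.

Definition hat (a : nat) : Zhat := MkZhat (hatf_compat a).

Definition zcontinuous (f : Zhat -> Zhat) : Prop :=
  forall s n, 0 < n -> exists2 m, 0 < m & forall t, zeqmod m t s -> zeqmod n (f t) (f s).

Definition period_map (f : Zhat -> Zhat) (P : nat -> nat) : Prop :=
  (forall n, 0 < n -> 0 < P n) /\
  (forall n s t, 0 < n -> zeqmod (P n) s t -> zeqmod n (f s) (f t)).

Definition congruence_stable (f : Zhat -> Zhat) : Prop :=
  zcontinuous f /\
  exists P, period_map f P /\
    forall n, 0 < n -> exists K, forall k, K <= k -> iter k P n = iter k.+1 P n.

(* the reduction f_m : Z/P(m)Z -> Z/mZ, on residues a in [0, P(m)) *)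
Definition reduction (f : Zhat -> Zhat) (m : nat) (a : nat) : nat := zval (f (hat a)) m.

Definition is_cycle_length (sigma : nat -> nat) (y l : nat) : Prop :=
  0 < l /\ (exists k, iter k sigma y = iter (k + l) sigma y) /\
  (forall l', 0 < l' -> (exists k, iter k sigma y = iter (k + l') sigma y) -> l <= l').

Definition is_period (sigma : nat -> nat) (m L : nat) : Prop :=
  exists cl : nat -> nat,
    (forall y, y < m -> is_cycle_length sigma y (cl y)) /\
    L = \big[lcmn/1]_(y < m) cl y.

Definition zconverges (u : nat -> Zhat) (l : Zhat) : Prop :=
  forall n, 0 < n -> exists N, forall i, N <= i -> zeqmod n (u i) l.

(* g is f^{Uparrow}_x : g s = lim f^{n_i}(x) for every sequence of positive integers
   n_i -> +oo (in R) with hat(n_i) -> s in Zhat *)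
Definition is_uparrow (f : Zhat -> Zhat) (x : Zhat) (g : Zhat -> Zhat) : Prop :=
  forall (s : Zhat) (ns : nat -> nat),
    (forall i, 0 < ns i) ->
    (forall M, exists N, forall i, N <= i -> M <= ns i) ->
    zconverges (fun i => hat (ns i)) s ->
    zconverges (fun i => iter (ns i) f x) (g s).

From mathcomp Require Import all_boot.
From mathcomp Require Import zify.

Set Implicit Arguments.
Unset Strict Implicit.
Unset Printing Implicit Defensive.

(* Iterating a period map transports congruences: u =_(P^k n) v gives
   f^k u =_n f^k v.  Since P fixes m := mu(n), f preserves congruence mod m,
   so the residues mod m of the orbit of x form the orbit of x mod m under
   the reduction f_m, which is eventually periodic with period lambda(n).
   Hence for large a the class of f^a(x) mod n depends only on a mod lambda(n)
   and on x mod m.  Both properties pass to f^Uparrow_x s, the limit of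
   f^(a_i)(x) along a_i = (s mod i!) + i! (i + 1), which tends to s in Zhat and
   to infinity in R. *)

Lemma zval_hat a n : 0 < n -> zval (hat a) n = a %% n.
Proof. by case: n. Qed.

Lemma zval_lt (x : Zhat) n : 0 < n -> zval x n < n.
Proof. by case: x => z [_ [H _]] /= /H. Qed.

Lemma zval_dvd (x : Zhat) m n :
  0 < m -> 0 < n -> m %| n -> zval x m = zval x n %% m.
Proof. by case: x => z [_ [_ H]] /=; apply: H. Qed.

Lemma zeqmod_hat_zval (x : Zhat) m : 0 < m -> zeqmod m x (hat (zval x m)).
Proof. by move=> m0; rewrite /zeqmod zval_hat // modn_small // zval_lt. Qed.

Lemma zconverges_eqmod (u v : nat -> Zhat) l l' n :
  0 < n -> zconverges u l -> zconverges v l' ->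
  (exists N, forall i, N <= i -> zeqmod n (u i) (v i)) -> zeqmod n l l'.
Proof.
move=> n0 /(_ n n0) [N1 H1] /(_ n n0) [N2 H2] [N3 H3].
set i := maxn N1 (maxn N2 N3).
rewrite /zeqmod -(H1 i) -?(H2 i); try by rewrite /i; lia.
by apply: H3; rewrite /i; lia.
Qed.

Section NatApprox.

Variable s : Zhat.

Definition nat_approx (i : nat) : nat := zval s i`! + i`! * i.+1.

Lemma nat_approx_gt0 i : 0 < nat_approx i.
Proof. by rewrite /nat_approx; have := fact_gt0 i; lia. Qed.

Lemma leq_nat_approx i : i <= nat_approx i.
Proof. by rewrite /nat_approx; have := fact_gt0 i; nia. Qed.

Lemma nat_approx_unbounded M : exists N, forall i, N <= i -> M <= nat_approx i.
Proof. by exists M => i Mi; apply: leq_trans Mi (leq_nat_approx i). Qed.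

Lemma nat_approx_mod n i : 0 < n -> n <= i -> nat_approx i %% n = zval s n.
Proof.
move=> n0 ni; have ndvd : n %| i`! by apply: dvdn_fact; rewrite n0.
rewrite -modnDm (eqP (dvdn_mulr _ ndvd)) addn0 modn_mod.
by rewrite -zval_dvd // fact_gt0.
Qed.

Lemma nat_approx_cvg : zconverges (fun i => hat (nat_approx i)) s.
Proof.
move=> n n0; exists n => i ni.
by rewrite /zeqmod zval_hat // nat_approx_mod.
Qed.

Lemma uparrow_nat_approx f x g :
  is_uparrow f x g -> zconverges (fun i => iter (nat_approx i) f x) (g s).
Proof.
move=> Hg; apply: Hg; [exact: nat_approx_gt0 | exact: nat_approx_unbounded |].
exact: nat_approx_cvg.
Qed.

End NatApprox.

Lemma uparrow_eqmod f x g n L :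
  is_uparrow f x g -> 0 < n -> 0 < L ->
  (exists K, forall u w, K <= u -> K <= w -> u = w %[mod L] ->
     zeqmod n (iter u f x) (iter w f x)) ->
  forall s t, zeqmod L s t -> zeqmod n (g s) (g t).
Proof.
move=> Hg n0 L0 [K HK] s t Est.
apply: (zconverges_eqmod n0 (uparrow_nat_approx s Hg) (uparrow_nat_approx t Hg)).
exists (maxn K L) => i iKL; apply: HK.
- by apply: leq_trans (leq_nat_approx s i); lia.
- by apply: leq_trans (leq_nat_approx t i); lia.
by rewrite !nat_approx_mod //; lia.
Qed.

Lemma uparrow_eqmod_start f x y gx gy n :
  is_uparrow f x gx -> is_uparrow f y gy -> 0 < n ->
  (exists K, forall a, K <= a -> zeqmod n (iter a f x) (iter a f y)) ->
  forall s, zeqmod n (gx s) (gy s).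
Proof.
move=> Hx Hy n0 [K HK] s.
apply: (zconverges_eqmod n0 (uparrow_nat_approx s Hx) (uparrow_nat_approx s Hy)).
by exists K => i Ki; apply/HK/(leq_trans Ki)/leq_nat_approx.
Qed.

Section EventuallyPeriodic.

Variables (sigma : nat -> nat) (y k0 l : nat).
Hypothesis cycle_l : iter k0 sigma y = iter (k0 + l) sigma y.

Lemma iter_addn_mul_cycle u c :
  k0 <= u -> iter (u + c * l) sigma y = iter u sigma y.
Proof.
have cycle_cl : iter (k0 + c * l) sigma y = iter k0 sigma y.
  elim: c => [|c IH]; first by rewrite addn0.
  by rewrite mulSn addnA [k0 + l + _]addnC iterD -cycle_l -iterD addnC.
by move=> k0u; rewrite -(subnK k0u) -addnA iterD cycle_cl -iterD.
Qed.

Lemma iter_eq_mod_cycle u w :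
  k0 <= u -> k0 <= w -> u = w %[mod l] -> iter u sigma y = iter w sigma y.
Proof.
wlog uw : u w / u <= w => [Hwlog k0u k0w Euw|k0u _ Euw].
  by case: (leqP u w) => [uw|/ltnW wu]; [apply: Hwlog | symmetry; apply: Hwlog].
have /dvdnP [c Ec] : l %| w - u by rewrite -eqn_mod_dvd // Euw.
by rewrite -(subnKC uw) Ec iter_addn_mul_cycle.
Qed.

End EventuallyPeriodic.

Lemma is_period_gt0 sigma m L : is_period sigma m L -> 0 < L.
Proof.
case=> cl [Hcl ->]; apply: (big_ind (fun v => 0 < v)) => // [a b a0 b0|z _].
  by rewrite lcmn_gt0 a0.
by case: (Hcl z (ltn_ord z)).
Qed.

Lemma is_period_cycle sigma m L y :
  is_period sigma m L -> y < m -> exists k0, iter k0 sigma y = iter (k0 + L) sigma y.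
Proof.
case=> cl [Hcl EL] ym; have [_ [[k0 Hk0] _]] := Hcl y ym.
have /dvdnP [c ->] : cl y %| L.
  by rewrite EL (bigD1 (Ordinal ym)) //=; apply: dvdn_lcml.
by exists k0; rewrite (iter_addn_mul_cycle Hk0).
Qed.

Lemma period_map_iter_gt0 f P j n : period_map f P -> 0 < n -> 0 < iter j P n.
Proof. by move=> HP n0; elim: j => //= j IH; apply: HP.1. Qed.

Lemma period_map_iter f P j n u v : period_map f P -> 0 < n ->
  zeqmod (iter j P n) u v -> zeqmod n (iter j f u) (iter j f v).
Proof.
move=> HP; elim: j n => [|j IH] n n0 //; rewrite iterSr => /(IH _ (HP.1 n n0)).
exact: HP.2.
Qed.

Section StablePeriod.

Variables (f : Zhat -> Zhat) (P : nat -> nat) (n m k : nat).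
Hypotheses (HP : period_map f P) (n0 : 0 < n).
Hypotheses (iter_P_n : iter k P n = m) (P_m : P m = m).

Lemma stable_period_gt0 : 0 < m.
Proof. by rewrite -iter_P_n; apply: period_map_iter_gt0 HP n0. Qed.

Lemma iter_eqmod_stable j u v :
  zeqmod m u v -> zeqmod m (iter j f u) (iter j f v).
Proof.
have iter_P_m : iter j P m = m by elim: j => //= j ->.
by move=> Euv; apply: (period_map_iter HP stable_period_gt0); rewrite iter_P_m.
Qed.

Lemma iter_eqmod_tail a u v :
  k <= a -> zeqmod m u v -> zeqmod n (iter a f u) (iter a f v).
Proof.
move=> ka /(iter_eqmod_stable (a - k)) Euv.
by rewrite -(subnKC ka) !iterD; apply: (period_map_iter HP n0); rewrite iter_P_n.
Qed.

Lemma zval_iter_reduction x i :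
  zval (iter i f x) m = iter i (reduction f m) (zval x m).
Proof.
elim: i => //= i <-; rewrite /reduction.
apply: (HP.2 m _ _ stable_period_gt0).
by rewrite P_m; apply: zeqmod_hat_zval stable_period_gt0.
Qed.

Lemma orbit_eventually_periodic x L :
  is_period (reduction f m) m L ->
  exists K, forall u w, K <= u -> K <= w -> u = w %[mod L] ->
    zeqmod n (iter u f x) (iter w f x).
Proof.
move=> HL; have [k0 Hk0] := is_period_cycle HL (zval_lt x stable_period_gt0).
exists (k + k0) => u w Ku Kw Euw; have [ku kw] : k <= u /\ k <= w by lia.
rewrite -(subnKC ku) -(subnKC kw) !iterD.
apply: (iter_eqmod_tail (leqnn k)).
rewrite /zeqmod !zval_iter_reduction; apply: (iter_eq_mod_cycle Hk0); try lia.
by apply/eqP; rewrite -(eqn_modDl k) !subnKC //; apply/eqP.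
Qed.

End StablePeriod.

Theorem proposition3p8 (f : Zhat -> Zhat) (P mu lambda : nat -> nat)
  (Hf : congruence_stable f) (HP : period_map f P)
  (Hmu : forall n, 0 < n -> exists k, 0 < k /\ mu n = iter k P n /\ mu n = iter k.+1 P n)
  (Hlambda : forall n, 0 < n -> is_period (reduction f (mu n)) (mu n) (lambda n))
  (up : Zhat -> Zhat -> Zhat) (Hup : forall x, is_uparrow f x (up x)) :
  (forall x, period_map (up x) lambda) /\
  (forall x y s n, 0 < n -> zeqmod (mu n) x y -> zeqmod n (up x s) (up y s)).
Proof.
have mu_stable n : 0 < n -> exists k, iter k P n = mu n /\ P (mu n) = mu n.
  by case/Hmu=> k [_ [E1 E2]]; exists k; split; last rewrite {2}E2 /= -E1.
split=> [x|x y s n n0 Exy].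
- split=> [n n0|n s t n0]; first exact: is_period_gt0 (Hlambda n n0).
  have [k [Hk Pmu]] := mu_stable n n0.
  apply: (uparrow_eqmod (Hup x) n0 (is_period_gt0 (Hlambda n n0))).
  exact: orbit_eventually_periodic HP n0 Hk Pmu x _ (Hlambda n n0).
- have [k [Hk Pmu]] := mu_stable n n0.
  apply: (uparrow_eqmod_start (Hup x) (Hup y) n0).
  by exists k => a ka; apply: (iter_eqmod_tail HP n0 Hk Pmu).
Qed.
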